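(* Let $\mathcal C$ be a Clifford circuit on $n$ qubits of depth $\Delta$. The accumulator $F\mapsto\overrightarrow F$ and the back-accumulator $F\mapsto\overleftarrow F$ are group automorphisms of $\overline{\mathcal P}_{n(\Delta+1)}$.
   Context: A Clifford circuit on $n$ qubits is a finite sequence of operations, each a unitary Clifford gate or a Pauli measurement, each with a level in $\{1,2,\dots\}$, operations of equal level having disjoint supports; the depth $\Delta$ is the maximal level. $\overline{\mathcal P}_N$ is the $N$-qubit Pauli group modulo the phases $\{\pm1,\pm i\}$. For $1\le\ell\le\Delta$, $U_\ell$ is the product of all unitary gates of level $\ell$ (identity if none). A fault operator $F\in\overline{\mathcal P}_{n(\Delta+1)}$ acts on qubits $(\ell+0.5,q)$, $0\le\ell\le\Delta$, $1\le q\le n$; $F_{\ell+0.5}\in\overline{\mathcal P}_n$ is its component on level $\ell+0.5$. Cumulant $\overrightarrow F$: start with $\overrightarrow F=F$; for $\ell=1,\dots,\Delta$ in increasing order replace $\overrightarrow F_{\ell+0.5}$ by $\overrightarrow F_{\ell+0.5}\cdot U_\ell\overrightarrow F_{\ell-0.5}U_\ell^{-1}$. Back-cumulant $\overleftarrow F$: start with $\overleftarrow F=F$; for $\ell=\Delta,\dots,1$ in decreasing order replace $\overleftarrow F_{\ell-0.5}$ by $\overleftarrow F_{\ell-0.5}\cdot U_\ell^{-1}\overleftarrow F_{\ell+0.5}U_\ell$. *)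

From mathcomp Require Import all_boot all_order all_algebra all_field.
From Stdlib Require List.
Set Implicit Arguments.
Unset Strict Implicit.
Unset Printing Implicit Defensive.
Import Order.TTheory GRing.Theory Num.Theory.
Local Open Scope ring_scope.

(* An element of P̄_n is labelled by (x,z) in (F_2^n)^2: it is the class of the
   operator X^x Z^z = ⊗_q X^{x_q} Z^{z_q} modulo the phases {±1, ±i}.
   The group law of P̄_n (product of representatives, modulo phase) is
   componentwise XOR of the labels. *)
Definition Pbar (n : nat) := {ffun 'I_n -> bool * bool}.

Definition pmul n (a b : Pbar n) : Pbar n :=
  [ffun q => (((a q).1 (+) (b q).1), ((a q).2 (+) (b q).2))].

(* bit q of the computational basis index i (qubit q <-> binary digit q) *)
Definition bit (i q : nat) : bool := odd (i %/ 2 ^ q).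

(* The matrix X^x Z^z on (C^2)^{⊗ n}, basis indexed by 'I_(2^n). *)
Definition pauli n (a : Pbar n) : 'M[algC]_(2 ^ n) :=
  \matrix_(i, j)
    (if [forall q : 'I_n, bit i q == bit j q (+) (a q).1]
     then (-1) ^+ (\sum_(q < n) ((a q).2 && bit j q))
     else 0).

Definition adjmx m (U : 'M[algC]_m) : 'M[algC]_m := map_mx Num.conj (trmx U).

Definition is_clifford k (U : 'M[algC]_(2 ^ k)) : Prop :=
  U *m adjmx U = 1%:M /\
  forall a : Pbar k, exists (b : Pbar k) (c : algC),
      U *m pauli a *m invmx U = c *: pauli b.

(* Action of conjugation P |-> U P U^{-1} on P̄_n: the class b such that
   U P_a U^{-1} is a scalar multiple of P_b (unique when U is Clifford). *)
Definition pconj n (U : 'M[algC]_(2 ^ n)) (a : Pbar n) : Pbar n :=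
  odflt a [pick b : Pbar n |
             (mxvec (U *m pauli a *m invmx U) <= mxvec (pauli b))%MS].

Lemma pow2_gt0 k : (0 < 2 ^ k)%N.
Proof. by rewrite expn_gt0. Qed.

(* index of the restriction of basis state i to the qubits of S
   (S enumerated in increasing order) *)
Definition restr n (S : {set 'I_n}) (i : nat) : 'I_(2 ^ #|S|) :=
  Ordinal (ltn_pmod (\sum_(k < #|S|) bit i (@enum_val _ (mem S) k) * 2 ^ k)%N
                    (pow2_gt0 #|S|)).

(* the n-qubit operator V ⊗ Id obtained by letting V act on the qubits of S *)
Definition embed n (S : {set 'I_n}) (V : 'M[algC]_(2 ^ #|S|)) : 'M[algC]_(2 ^ n) :=
  \matrix_(i, j)
    (if [forall q : 'I_n, (q \notin S) ==> (bit i q == bit j q)]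
     then V (restr S i) (restr S j) else 0).

Inductive operation (n : nat) :=
| Gate (lvl : nat) (S : {set 'I_n}) (V : 'M[algC]_(2 ^ #|S|))
| Meas (lvl : nat) (S : {set 'I_n}) (P : Pbar #|S|).

Definition level n (o : operation n) : nat :=
  match o with Gate l _ _ => l | Meas l _ _ => l end.

Definition support n (o : operation n) : {set 'I_n} :=
  match o with Gate _ T _ => T | Meas _ T _ => T end.

Definition circuit n := seq (operation n).

Definition is_clifford_op n (o : operation n) : Prop :=
  match o with Gate _ T V => is_clifford V | Meas _ _ _ => True end.

Definition clifford_circuit n (C : circuit n) : Prop :=
  (forall o, List.In o C -> is_clifford_op o /\ (0 < level o)%N) /\
  (forall i j : nat, (i < size C)%N -> (j < size C)%N -> i <> j ->
     forall o1 o2, List.nth_error C i = Some o1 -> List.nth_error C j = Some o2 ->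
     level o1 = level o2 -> [disjoint support o1 & support o2]).

Definition depth n (C : circuit n) : nat := \max_(o <- C) level o.

Definition gate_mx n (o : operation n) : 'M[algC]_(2 ^ n) :=
  match o with Gate _ T V => embed V | Meas _ _ _ => 1%:M end.

Definition Ulev n (C : circuit n) (l : nat) : 'M[algC]_(2 ^ n) :=
  foldr (fun o M => gate_mx o *m M) 1%:M
        [seq o <- C | (if o is Gate _ _ _ then true else false) && (level o == l)].

(* P̄_{n(Δ+1)}, with qubit (l+0.5, q) <-> (l, q); component F_{l+0.5} = F l *)
Definition Fault n (D : nat) := {ffun 'I_D.+1 -> Pbar n}.

Definition fmul n D (F G : Fault n D) : Fault n D := [ffun l => pmul (F l) (G l)].

Definition comp n D (F : Fault n D) (l : nat) : Pbar n := F (inord l).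

(* cumulant: value of the level-(l+0.5) component after the increasing sweep *)
Fixpoint cum n (C : circuit n) (F : Fault n (depth C)) (l : nat) : Pbar n :=
  match l with
  | 0 => comp F 0
  | l'.+1 => pmul (comp F l'.+1) (pconj (Ulev C l'.+1) (cum F l'))
  end.

Definition cumulant n (C : circuit n) (F : Fault n (depth C)) : Fault n (depth C) :=
  [ffun l : 'I_(depth C).+1 => cum F l].

(* back-cumulant: bcum k is the value of the level-(Δ-k+0.5) component after
   the decreasing sweep; U^{-1} P U is conjugation by invmx U *)
Fixpoint bcum n (C : circuit n) (F : Fault n (depth C)) (k : nat) : Pbar n :=
  match k with
  | 0 => comp F (depth C)
  | k'.+1 => pmul (comp F (depth C - k'.+1))
                  (pconj (invmx (Ulev C (depth C - k'))) (bcum F k'))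
  end.

Definition back_cumulant n (C : circuit n) (F : Fault n (depth C)) : Fault n (depth C) :=
  [ffun l : 'I_(depth C).+1 => bcum F (depth C - l)].

Definition fault_automorphism n D (f : Fault n D -> Fault n D) : Prop :=
  bijective f /\ forall F G, f (fmul F G) = fmul (f F) (f G).

(* Conjugation by a matrix U that normalizes the Pauli group induces a map on
   P̄_n, and this map is a homomorphism because Pauli matrices multiply as
   P_a P_b = ± P_(a+b) while a nonzero multiple of P_a determines a.  Each U_l
   is a product of Clifford gates V with supports S, and V ⊗ Id conjugates P_a
   into a multiple of the Pauli that agrees with a off S and with the image of
   a|_S under V on S; hence U_l and U_l^-1 normalize the Pauli group.  The
   sweeps defining the (back-)cumulant are therefore homomorphisms, level by
   level, and they are injective, hence bijective on the finite group
   P̄_(n(Δ+1)): F_(l+1) = cum_(l+1) · U_(l+1) cum_l U_(l+1)^-1 recovers F from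
   its cumulant. *)

From mathcomp Require Import all_boot all_order all_algebra all_field.
From mathcomp Require Import zify.
Set Implicit Arguments.
Unset Strict Implicit.
Unset Printing Implicit Defensive.
Import Order.TTheory GRing.Theory Num.Theory.
Local Open Scope ring_scope.

(** * Binary encoding of basis states *)

Lemma bit0E i : bit i 0 = odd i.
Proof. by rewrite /bit expn0 divn1. Qed.

Lemma bitSE i k : bit i k.+1 = bit i./2 k.
Proof. by rewrite /bit expnS divnMA divn2. Qed.

Definition nat_of_bits m (f : 'I_m -> bool) : nat := (\sum_(q < m) f q * 2 ^ q)%N.

Lemma nat_of_bitsS m (f : 'I_m.+1 -> bool) :
  nat_of_bits f = (f ord0 + (nat_of_bits (fun k => f (lift ord0 k))).*2)%N.
Proof.
rewrite /nat_of_bits big_ord_recl expn0 muln1 -muln2 big_distrl /=.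
by congr (_ + _)%N; apply: eq_bigr => i _; rewrite expnS mulnCA mulnC.
Qed.

Lemma nat_of_bits_lt m (f : 'I_m -> bool) : (nat_of_bits f < 2 ^ m)%N.
Proof.
elim: m f => [|m IH] f; first by rewrite /nat_of_bits big_ord0.
rewrite nat_of_bitsS expnS; have := IH (fun k => f (lift ord0 k)).
by case: (f ord0) => /=; lia.
Qed.

Lemma bit_nat_of_bits m (f : 'I_m -> bool) (k : 'I_m) : bit (nat_of_bits f) k = f k.
Proof.
elim: m f k => [|m IH] f [[|k] Hk] //; rewrite nat_of_bitsS.
  by rewrite bit0E oddD odd_double addbF oddb; congr f; apply: val_inj.
rewrite bitSE half_bit_double (IH _ (Ordinal (Hk : (k < m)%N))).
by congr f; apply: val_inj.
Qed.

Lemma nat_of_bitsK m i : (i < 2 ^ m)%N -> nat_of_bits (fun q : 'I_m => bit i q) = i.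
Proof.
elim: m i => [|m IH] i Hi.
  by rewrite /nat_of_bits big_ord0; move: Hi; rewrite expn0; case: i.
have Hhalf : (i./2 < 2 ^ m)%N by rewrite ltn_half_double -mul2n -expnS.
rewrite nat_of_bitsS bit0E -[in RHS](odd_double_half i) -[in RHS](IH _ Hhalf).
by congr (_ + _.*2)%N; apply: eq_bigr => q _; rewrite bitSE.
Qed.

Notation bvec n := {ffun 'I_n -> bool}.

Definition ord_of_bits n (u : bvec n) : 'I_(2 ^ n) := Ordinal (nat_of_bits_lt u).
Definition bits_of_ord n (i : 'I_(2 ^ n)) : bvec n := [ffun q : 'I_n => bit i q].

Lemma bit_ord_of_bits n (u : bvec n) (q : 'I_n) : bit (ord_of_bits u) q = u q.
Proof. exact: bit_nat_of_bits. Qed.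

Lemma bits_of_ordK n : cancel (@bits_of_ord n) (@ord_of_bits n).
Proof.
move=> i; apply: val_inj; rewrite /= -[RHS](nat_of_bitsK (ltn_ord i)).
by apply: eq_bigr => q _; rewrite ffunE.
Qed.

Lemma ord_of_bitsK n : cancel (@ord_of_bits n) (@bits_of_ord n).
Proof. by move=> u; apply/ffunP => q; rewrite ffunE bit_ord_of_bits. Qed.

Definition mxb n (M : 'M[algC]_(2 ^ n)) (u v : bvec n) : algC :=
  M (ord_of_bits u) (ord_of_bits v).

Lemma mxbP n (M N : 'M[algC]_(2 ^ n)) : (forall u v, mxb M u v = mxb N u v) -> M = N.
Proof.
by move=> E; apply/matrixP => i j; rewrite -(bits_of_ordK i) -(bits_of_ordK j); apply: E.
Qed.

Lemma mxb_mul n (A B : 'M[algC]_(2 ^ n)) u w :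
  mxb (A *m B) u w = \sum_v mxb A u v * mxb B v w.
Proof.
rewrite /mxb mxE (reindex (@ord_of_bits n)) //.
by exists (@bits_of_ord n) => i _; [apply: ord_of_bitsK | apply: bits_of_ordK].
Qed.

Lemma mxbZ n c (A : 'M[algC]_(2 ^ n)) u w : mxb (c *: A) u w = c * mxb A u w.
Proof. by rewrite /mxb mxE. Qed.

Lemma mxb1 n (u w : bvec n) : mxb 1%:M u w = (u == w)%:R.
Proof. by rewrite /mxb mxE (can_eq (@ord_of_bitsK n)). Qed.

(** * Pauli matrices *)

Definition xorv n (u x : bvec n) : bvec n := [ffun q => u q (+) x q].
Definition xpart n (a : Pbar n) : bvec n := [ffun q => (a q).1].
Definition zpart n (a : Pbar n) : bvec n := [ffun q => (a q).2].

Lemma xorvE n (u x : bvec n) q : xorv u x q = u q (+) x q.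
Proof. exact: ffunE. Qed.

Lemma xpartE n (a : Pbar n) q : xpart a q = (a q).1.
Proof. exact: ffunE. Qed.

Lemma zpartE n (a : Pbar n) q : zpart a q = (a q).2.
Proof. exact: ffunE. Qed.

Definition sign n (f : 'I_n -> bool) : algC := (-1) ^+ (\sum_(q < n) f q)%N.

Lemma mxb_pauli n (a : Pbar n) w v :
  mxb (pauli a) w v =
  if w == xorv v (xpart a) then sign (fun q => zpart a q && v q) else 0.
Proof.
have -> : w == xorv v (xpart a) =
          [forall q : 'I_n, bit (ord_of_bits w) q == bit (ord_of_bits v) q (+) (a q).1].
  apply/eqP/forallP => [-> q|E]; first by rewrite !bit_ord_of_bits !ffunE.
  by apply/ffunP => q; have /eqP := E q; rewrite !bit_ord_of_bits !ffunE.
rewrite /mxb /pauli mxE; case: ifP => // _.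
by congr (_ ^+ _); apply: eq_bigr => q _; rewrite ffunE bit_ord_of_bits.
Qed.

Lemma mxb_mul_pauli n (A : 'M[algC]_(2 ^ n)) (a : Pbar n) u v :
  mxb (A *m pauli a) u v =
  mxb A u (xorv v (xpart a)) * sign (fun q => zpart a q && v q).
Proof.
rewrite mxb_mul (bigD1 (xorv v (xpart a))) //= mxb_pauli eqxx big1 ?addr0 //.
by move=> w /negbTE Hw; rewrite mxb_pauli Hw mulr0.
Qed.

Lemma sign_prod n (f : 'I_n -> bool) : sign f = \prod_q (-1) ^+ f q.
Proof. by rewrite /sign; apply: (big_morph _ (@exprD _ _)). Qed.

Lemma pauli_mul n (a b : Pbar n) :
  pauli a *m pauli b = sign (fun q => zpart a q && xpart b q) *: pauli (pmul a b).
Proof.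
apply: mxbP => u t; rewrite mxb_mul_pauli mxbZ !mxb_pauli.
have -> : xorv (xorv t (xpart b)) (xpart a) = xorv t (xpart (pmul a b)).
  by apply/ffunP => q; rewrite !ffunE addbAC addbA.
case: eqP => _; last by rewrite mul0r mulr0.
rewrite !sign_prod -!big_split /=; apply: eq_bigr => q _; rewrite !ffunE /=.
by case: (a q).2; case: (b q).2; case: (b q).1; case: (t q);
  rewrite /= ?expr0 ?expr1 ?mulrNN ?mulr1 ?mul1r.
Qed.

Lemma mxb_pauli_xpart n (a : Pbar n) : mxb (pauli a) (xpart a) 0 = 1.
Proof.
rewrite mxb_pauli ifT; last by apply/eqP/ffunP => q; rewrite !ffunE addFb.
by rewrite /sign big1 // => q _; rewrite !ffunE andbF.
Qed.

Definition deltav n (q : 'I_n) : bvec n := [ffun q' => q' == q].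

Lemma sign_deltav n (z : bvec n) (q : 'I_n) :
  sign (fun q' => z q' && deltav q q') = (-1) ^+ z q.
Proof.
rewrite /sign (bigD1 q) //= big1 ?addn0 ?ffunE ?eqxx ?andbT // => q' /negbTE q'q.
by rewrite ffunE q'q andbF.
Qed.

Lemma pbarP n (a b : Pbar n) : xpart a = xpart b -> zpart a = zpart b -> a = b.
Proof.
move=> /ffunP Ex /ffunP Ez; apply/ffunP => q; have := Ex q; have := Ez q.
by rewrite !ffunE; case: (a q); case: (b q) => /= ? ? ? ? -> ->.
Qed.

Lemma pauli_inj n (a b : Pbar n) (c d : algC) :
  c != 0 -> c *: pauli a = d *: pauli b -> a = b.
Proof.
move=> c_neq0 E.
have entry w v : c * mxb (pauli a) w v = d * mxb (pauli b) w v.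
  by rewrite -mxbZ E mxbZ.
have Ex : xpart a = xpart b.
  have := entry (xpart a) 0; rewrite mxb_pauli_xpart mulr1 mxb_pauli.
  case: eqP => [-> _ | _]; first by apply/ffunP => q; rewrite !ffunE addFb.
  by rewrite mulr0 => /eqP; rewrite (negbTE c_neq0).
have Ecd : c = d.
  by have := entry (xpart a) 0; rewrite mxb_pauli_xpart Ex mxb_pauli_xpart !mulr1.
apply: pbarP => //; apply/ffunP => q.
have := entry (xorv (deltav q) (xpart a)) (deltav q).
rewrite !mxb_pauli -Ex eqxx -Ecd !sign_deltav => /(mulfI c_neq0).
exact: signr_inj.
Qed.

(** * Operators acting on a subset of the qubits *)

Section Embed.
Variables (n : nat) (S : {set 'I_n}).
Local Notation qubit k := (@enum_val _ (mem S) k).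

Definition restrv T (u : {ffun 'I_n -> T}) : {ffun 'I_#|S| -> T} :=
  [ffun k => u (qubit k)].

Definition mergev T (t : {ffun 'I_n -> T}) (m : {ffun 'I_#|S| -> T}) : {ffun 'I_n -> T} :=
  [ffun q => if [pick k | qubit k == q] is Some k then m k else t q].

Definition agree_off (T : eqType) (u v : {ffun 'I_n -> T}) : bool :=
  [forall q, (q \notin S) ==> (u q == v q)].

Definition sign_off (f : 'I_n -> bool) : algC :=
  (-1) ^+ (\sum_(q < n | q \notin S) f q)%N.

Lemma eq_agree_off (T : eqType) (u v v' : {ffun 'I_n -> T}) :
  (forall q, q \notin S -> v q = v' q) -> agree_off u v = agree_off u v'.
Proof. by move=> vv'; apply: eq_forallb => q; case: (boolP (q \in S)) => //= /vv'->. Qed.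

Lemma eq_sign_off (f f' : 'I_n -> bool) :
  (forall q, q \notin S -> f q = f' q) -> sign_off f = sign_off f'.
Proof. by move=> ff'; congr (_ ^+ _); apply: eq_bigr => q /ff'->. Qed.

Lemma mergev_in T t m k : @mergev T t m (qubit k) = m k.
Proof.
rewrite ffunE; case: pickP => [k' /eqP/enum_val_inj -> // | /(_ k)].
by rewrite eqxx.
Qed.

Lemma mergev_out T t m q : q \notin S -> @mergev T t m q = t q.
Proof.
move=> qNS; rewrite ffunE; case: pickP => // k /eqP qk.
by move: qNS; rewrite -qk enum_valP.
Qed.

Lemma restrv_mergev T t m : restrv (@mergev T t m) = m.
Proof. by apply/ffunP => k; rewrite ffunE mergev_in. Qed.

Lemma agree_off_mergev (T : eqType) t m : agree_off (@mergev T t m) t.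
Proof. by apply/forallP => q; apply/implyP => qNS; rewrite mergev_out. Qed.

Lemma mergev_restrv (T : eqType) (v t : {ffun 'I_n -> T}) :
  agree_off v t -> mergev t (restrv v) = v.
Proof.
move=> /forallP vt; apply/ffunP => q; case: (boolP (q \in S)) => qS.
  by rewrite -(enum_rankK_in qS qS) mergev_in ffunE.
by rewrite mergev_out //; apply/esym/eqP; exact: (implyP (vt q)).
Qed.

Lemma eq_agree_restrv (T : eqType) (u w : {ffun 'I_n -> T}) :
  (u == w) = agree_off u w && (restrv u == restrv w).
Proof.
apply/eqP/andP => [-> | [uw /eqP Ruw]]; first by split=> //; apply/forallP => q; apply/implyP.
by rewrite -(mergev_restrv uw) Ruw mergev_restrv //; apply/forallP => q; apply/implyP.
Qed.

Lemma sum_agree_off (g : bvec n -> algC) t :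
  \sum_(v | agree_off v t) g v = \sum_m g (mergev t m).
Proof.
rewrite (reindex_onto (mergev t) (@restrv bool)) => [|v]; last exact: mergev_restrv.
by apply: eq_bigl => m; rewrite agree_off_mergev restrv_mergev eqxx.
Qed.

Lemma sign_split (f : 'I_n -> bool) : sign f = sign_off f * sign (fun k => f (qubit k)).
Proof.
rewrite /sign /sign_off -exprD (bigID (fun q => q \notin S)) /=; congr (_ ^+ (_ + _))%N.
rewrite (eq_bigl (mem S)) => [|q]; last by rewrite negbK.
by rewrite big_enum_val.
Qed.

Lemma restr_ord_of_bits (u : bvec n) : restr S (ord_of_bits u) = ord_of_bits (restrv u).
Proof.
have E : (\sum_(k < #|S|) bit (ord_of_bits u) (qubit k) * 2 ^ k)%N = nat_of_bits (restrv u).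
  by apply: eq_bigr => k _; rewrite ffunE bit_ord_of_bits.
by apply: val_inj; rewrite /= E modn_small // nat_of_bits_lt.
Qed.

Lemma mxb_embed (V : 'M[algC]_(2 ^ #|S|)) u v :
  mxb (@embed n S V) u v = if agree_off u v then mxb V (restrv u) (restrv v) else 0.
Proof.
rewrite /mxb /embed mxE !restr_ord_of_bits.
by congr (if _ then _ else _); apply: eq_forallb => q; rewrite !bit_ord_of_bits.
Qed.

Local Notation embed := (@embed n S).

Lemma mxb_mul_embed (A : 'M[algC]_(2 ^ n)) (W : 'M[algC]_(2 ^ #|S|)) u t :
  mxb (A *m embed W) u t = \sum_m mxb A u (mergev t m) * mxb W m (restrv t).
Proof.
rewrite mxb_mul (eq_bigr (fun v =>
    if agree_off v t then mxb A u v * mxb W (restrv v) (restrv t) else 0)) => [|v _].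
  by rewrite -big_mkcond sum_agree_off; apply: eq_bigr => m _; rewrite restrv_mergev.
by rewrite mxb_embed; case: ifP; rewrite ?mulr0.
Qed.

Lemma embed_mul (A B : 'M[algC]_(2 ^ #|S|)) : embed A *m embed B = embed (A *m B).
Proof.
apply: mxbP => u t; rewrite mxb_mul_embed mxb_embed mxb_mul.
have agree_u m : agree_off u (mergev t m) = agree_off u t.
  by apply: eq_agree_off => q /mergev_out.
case: ifP => ut; last by rewrite big1 // => m _; rewrite mxb_embed agree_u ut mul0r.
by apply: eq_bigr => m _; rewrite mxb_embed agree_u ut restrv_mergev.
Qed.

Lemma embed1 : embed 1%:M = 1%:M.
Proof. by apply: mxbP => u t; rewrite mxb_embed !mxb1 (eq_agree_restrv u t); case: ifP. Qed.

Lemma mxb_embed_mul_pauli (V : 'M[algC]_(2 ^ #|S|)) (a : Pbar n) u v :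
  mxb (embed V *m pauli a) u v =
  if agree_off u (xorv v (xpart a))
  then sign_off (fun q => zpart a q && v q) * mxb (V *m pauli (restrv a)) (restrv u) (restrv v)
  else 0.
Proof.
rewrite !mxb_mul_pauli mxb_embed (sign_split (fun q => _ && _)).
have -> : restrv (xorv v (xpart a)) = xorv (restrv v) (xpart (restrv a)).
  by apply/ffunP => k; rewrite !ffunE.
have -> : sign (fun k => zpart a (qubit k) && v (qubit k)) =
          sign (fun k => zpart (restrv a) k && restrv v k).
  by congr (_ ^+ _); apply: eq_bigr => k _; rewrite !ffunE.
by case: ifP; rewrite ?mul0r // mulrCA.
Qed.

Lemma mxb_embed_conj (V W : 'M[algC]_(2 ^ #|S|)) (a : Pbar n) u t :
  mxb (embed V *m pauli a *m embed W) u t =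
  if agree_off u (xorv t (xpart a))
  then sign_off (fun q => zpart a q && t q) *
       mxb (V *m pauli (restrv a) *m W) (restrv u) (restrv t)
  else 0.
Proof.
have agree_u m : agree_off u (xorv (mergev t m) (xpart a)) = agree_off u (xorv t (xpart a)).
  by apply: eq_agree_off => q qNS; rewrite !xorvE mergev_out.
have sign_t m : sign_off (fun q => zpart a q && mergev t m q) =
                sign_off (fun q => zpart a q && t q).
  by apply: eq_sign_off => q qNS; rewrite mergev_out.
rewrite mxb_mul_embed.
under eq_bigr do rewrite mxb_embed_mul_pauli agree_u sign_t restrv_mergev.
case: ifP => _; last by rewrite big1 // => m _; rewrite mul0r.
by rewrite mxb_mul big_distrr /=; apply: eq_bigr => m _; rewrite mulrA.
Qed.

Lemma embed_conj (V W : 'M[algC]_(2 ^ #|S|)) (a : Pbar n) (b : Pbar #|S|) c :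
  V *m pauli (restrv a) *m W = c *: pauli b ->
  embed V *m pauli a *m embed W = c *: pauli (mergev a b).
Proof.
move=> E; apply: mxbP => u t.
(* Both sides become instances of [mxb_embed_conj] once P_(mergev a b) is
   seen as its own conjugate by [embed 1]. *)
have -> : pauli (mergev a b) = embed 1%:M *m pauli (mergev a b) *m embed 1%:M.
  by rewrite embed1 mul1mx mulmx1.
rewrite mxbZ !mxb_embed_conj E mul1mx mulmx1 restrv_mergev mxbZ.
have -> : agree_off u (xorv t (xpart (mergev a b))) = agree_off u (xorv t (xpart a)).
  by apply: eq_agree_off => q qNS; rewrite !xorvE !xpartE mergev_out.
have -> : sign_off (fun q => zpart (mergev a b) q && t q) =
          sign_off (fun q => zpart a q && t q).
  by apply: eq_sign_off => q qNS; rewrite !zpartE mergev_out.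
by case: ifP; rewrite ?mulr0 // mulrCA.
Qed.

End Embed.

(** * Normalizers of the Pauli group *)

Lemma conjmxZ (F : fieldType) m (U : 'M[F]_m) c (f : 'M[F]_m) :
  conjmx U (c *: f) = c *: conjmx U f.
Proof. by rewrite /conjmx -scalemxAr -scalemxAl. Qed.

Lemma conjumxM (F : fieldType) m (U f g : 'M[F]_m) :
  U \in unitmx -> conjmx U (f *m g) = conjmx U f *m conjmx U g.
Proof. by move=> Uu; apply: conjmxM; rewrite inE stablemx_unit. Qed.

Lemma pauli_neq0 n (a : Pbar n) : pauli a != 0.
Proof.
apply/eqP => a0; have := mxb_pauli_xpart a; rewrite a0 /mxb mxE => /eqP.
by rewrite eq_sym oner_eq0.
Qed.

Section Normalizer.
Variable n : nat.
Implicit Types (U : 'M[algC]_(2 ^ n)) (a b : Pbar n).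

Definition normalizes_pauli U : Prop :=
  U \in unitmx /\ forall a, exists b c, conjmx U (pauli a) = c *: pauli b.

Lemma pconj_spec U a : normalizes_pauli U ->
  exists2 c, c != 0 & conjmx U (pauli a) = c *: pauli (pconj U a).
Proof.
case=> Uu Unorm; have [b [c E]] := Unorm a.
have c_neq0 : c != 0.
  apply: contra_neq (pauli_neq0 a) => c0.
  by rewrite -(conjmxK (pauli a) Uu) E c0 scale0r conjmx0.
suff -> : pconj U a = b by exists c.
rewrite /pconj -conjumx //; case: pickP => [b' | /(_ b)/negP[]].
  move=> /sub_rVP[d]; rewrite E -linearZ => /(can_inj mxvecK) Eb.
  by rewrite (pauli_inj c_neq0 Eb).
by rewrite E linearZ scalemx_sub.
Qed.

Lemma pconj_morph U : normalizes_pauli U -> {morph pconj U : a b / pmul a b}.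
Proof.
move=> HU a b; have [Uu _] := HU.
have [ca _ Ea] := pconj_spec a HU; have [cb _ Eb] := pconj_spec b HU.
have [cab cab0 Eab] := pconj_spec (pmul a b) HU.
have := congr1 (conjmx U) (pauli_mul a b).
rewrite conjumxM // conjmxZ Ea Eb Eab -scalemxAl -scalemxAr pauli_mul !scalerA => E.
by apply: pauli_inj (esym E); rewrite mulf_neq0 // signr_eq0.
Qed.

Lemma pconj_inj U : normalizes_pauli U -> injective (pconj U).
Proof.
move=> HU a a' E; have [Uu _] := HU.
have [c _ Ea] := pconj_spec a HU; have [c' c'0 Ea'] := pconj_spec a' HU.
apply: (pauli_inj c'0); apply: (can_inj (fun f => conjmxK f Uu)).
by rewrite !conjmxZ Ea Ea' E !scalerA mulrC.
Qed.

Lemma normalizes_pauli1 : normalizes_pauli 1%:M.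
Proof.
by split=> [|a]; [exact: unitmx1 | exists a, 1; rewrite conj1mx scale1r].
Qed.

Lemma normalizes_pauli_mul U V :
  normalizes_pauli U -> normalizes_pauli V -> normalizes_pauli (U *m V).
Proof.
move=> [Uu Unorm] [Vu Vnorm]; split=> [|a]; first by rewrite unitmx_mul Uu Vu.
have [b [c E]] := Vnorm a; have [b' [c' E']] := Unorm b.
by exists b', (c * c'); rewrite conjuMumx // E conjmxZ E' scalerA.
Qed.

Lemma normalizes_pauli_inv U : normalizes_pauli U -> normalizes_pauli (invmx U).
Proof.
move=> HU; have [Uu _] := HU; split=> [|a]; first by rewrite unitmx_inv.
(* [pconj U] is injective on a finite type, hence onto. *)
have [g _ gK] := injF_bij (pconj_inj HU).
have [c c0 E] := pconj_spec (g a) HU; rewrite gK in E.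
exists (g a), c^-1.
by rewrite -(conjmxK (pauli (g a)) Uu) E conjmxZ scalerA mulVf // scale1r.
Qed.

End Normalizer.

Lemma embed_normalizes_pauli n (S : {set 'I_n}) (V : 'M[algC]_(2 ^ #|S|)) :
  is_clifford V -> normalizes_pauli (embed V).
Proof.
case=> /mulmx1_unit[Vu _] Vnorm.
have embedV : embed V *m embed (invmx V) = 1%:M by rewrite embed_mul mulmxV // embed1.
have Eu : embed V \in unitmx := (mulmx1_unit embedV).1.
have invE : invmx (embed V) = embed (invmx V) by rewrite -[LHS]mulmx1 -embedV mulKmx.
split=> // a; have [b [c E]] := Vnorm (restrv S a).
by exists (mergev a b), c; rewrite conjumx // invE (embed_conj E).
Qed.

Lemma gate_normalizes_pauli n (o : operation n) :
  is_clifford_op o -> normalizes_pauli (gate_mx o).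
Proof.
case: o => [l S V | l S P] /=; first exact: embed_normalizes_pauli.
by move=> _; exact: normalizes_pauli1.
Qed.

Lemma Ulev_normalizes_pauli n (C : circuit n) l :
  clifford_circuit C -> normalizes_pauli (Ulev C l).
Proof.
case=> Cclif _; rewrite /Ulev; elim: C Cclif => [|o C IH] Cclif /=.
  exact: normalizes_pauli1.
have {}IH := IH (fun o' o'C => Cclif o' (or_intror o'C)).
case: ifP => // _; apply: normalizes_pauli_mul IH; apply: gate_normalizes_pauli.
by have [] := Cclif o (or_introl erefl).
Qed.

(** * Cumulants *)

Lemma pmulKK n (a b : Pbar n) : pmul (pmul a b) b = a.
Proof. by apply/ffunP => q; rewrite !ffunE /= !addbK; case: (a q). Qed.

Lemma pmulACA n (a b c d : Pbar n) :
  pmul (pmul a b) (pmul c d) = pmul (pmul a c) (pmul b d).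
Proof. by apply/ffunP => q; rewrite !ffunE /= addbACA [X in (_, X)]addbACA. Qed.

Section Cumulants.
Variables (n : nat) (C : circuit n).
Local Notation D := (depth C).
Implicit Types F G : Fault n D.

Lemma comp_fmul F G k : comp (fmul F G) k = pmul (comp F k) (comp G k).
Proof. by rewrite /comp ffunE. Qed.

Lemma comp_cumS F k :
  comp F k.+1 = pmul (cum F k.+1) (pconj (Ulev C k.+1) (cum F k)).
Proof. by rewrite /= pmulKK. Qed.

Lemma comp_bcumS F k :
  comp F (D - k.+1) = pmul (bcum F k.+1) (pconj (invmx (Ulev C (D - k))) (bcum F k)).
Proof. by rewrite /= pmulKK. Qed.

Lemma cumulant_inj : injective (@cumulant n C).
Proof.
move=> F G /ffunP E.
have Ecum k : (k <= D)%N -> cum F k = cum G k.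
  by move=> kD; have := E (inord k); rewrite !ffunE inordK.
apply/ffunP => l; rewrite -[l]inord_val -/(comp F l) -/(comp G l).
have := ltn_ord l; case: (nat_of_ord l) => [|k] kD; first exact: (Ecum 0%N).
by rewrite !comp_cumS !Ecum // ltnW.
Qed.

Lemma back_cumulant_inj : injective (@back_cumulant n C).
Proof.
move=> F G /ffunP E.
have Ebcum k : (k <= D)%N -> bcum F k = bcum G k.
  by move=> kD; have := E (inord (D - k)); rewrite !ffunE inordK ?subKn // ltnS leq_subr.
apply/ffunP => l; rewrite -[l]inord_val -/(comp F l) -/(comp G l).
rewrite -(subKn (ltn_ord l : (l <= D)%N)).
have := leq_subr l D; case: (D - l)%N => [|k] kD; first by rewrite subn0; exact: (Ebcum 0%N).
by rewrite !comp_bcumS !Ebcum // ltnW.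
Qed.

Hypothesis HC : clifford_circuit C.

Lemma cumulant_morph : {morph @cumulant n C : F G / fmul F G}.
Proof.
move=> F G; apply/ffunP => l; rewrite !ffunE; elim: (nat_of_ord l) => [|k IH] /=.
  exact: comp_fmul.
rewrite IH comp_fmul (pconj_morph (Ulev_normalizes_pauli _ HC)); exact: pmulACA.
Qed.

Lemma back_cumulant_morph : {morph @back_cumulant n C : F G / fmul F G}.
Proof.
move=> F G; apply/ffunP => l; rewrite !ffunE; elim: (D - l)%N => [|k IH] /=.
  exact: comp_fmul.
rewrite IH comp_fmul (pconj_morph (normalizes_pauli_inv (Ulev_normalizes_pauli _ HC))).
exact: pmulACA.
Qed.

End Cumulants.

Theorem mainTheorem7 (n : nat) (C : circuit n) :
  clifford_circuit C ->
  fault_automorphism (@cumulant n C) /\ fault_automorphism (@back_cumulant n C).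
Proof.
move=> HC; split; split.
- exact: injF_bij (@cumulant_inj n C).
- exact: cumulant_morph.
- exact: injF_bij (@back_cumulant_inj n C).
- exact: back_cumulant_morph.
Qed.
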